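(* Let $B$ be a C*-algebra and let $A$ be a regular subalgebra of $B$ satisfying the ideal intersection property. Then every $B$-invariant regular ideal of $A$ is normalizer-invariant.
   Context: Ideals are closed two-sided ideals. $A\subseteq B$ is a closed *-subalgebra. A normalizer of $A$ in $B$ is $n\in B$ with $n^*An\subseteq A$ and $nAn^*\subseteq A$; $A$ is a regular subalgebra if the normalizers span a dense subspace of $B$ and $A$ contains an approximate unit for $B$. A subset $S\subseteq A$ is normalizer-invariant if $nSn^*\subseteq S$ for every normalizer $n$. $S\subseteq A$ is $B$-invariant if $[SB]=[BS]$ ($[\cdot]$ = closed linear span). For an ideal $I$ of $A$, $\mathrm{Ann}_A(I)=\{x\in A: xs=0\ \forall s\in I\}$, and $I$ is regular if $\mathrm{Ann}_A(\mathrm{Ann}_A(I))=I$. $A$ satisfies the ideal intersection property if $J\cap A\neq\{0\}$ for every nonzero ideal $J$ of $B$. *)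

From mathcomp Require Import all_boot all_order all_algebra.
From mathcomp Require Import all_classical all_reals all_analysis.
From mathcomp Require Import complex.
Import Order.TTheory GRing.Theory Num.Theory.
Import numFieldNormedType.Exports.

Set Implicit Arguments.
Unset Strict Implicit.
Unset Printing Implicit Defensive.

Local Open Scope classical_set_scope.
Local Open Scope ring_scope.

Record cstar_algebra (R : realType) (V : completeNormedModType R[i]) := CstarAlgebra {
  cmul : V -> V -> V;
  cstar : V -> V;
  cmulA : forall x y z, cmul x (cmul y z) = cmul (cmul x y) z;
  cmul_linl : forall (a : R[i]) x y z, cmul (a *: x + y) z = a *: cmul x z + cmul y z;
  cmul_linr : forall (a : R[i]) x y z, cmul z (a *: x + y) = a *: cmul z x + cmul z y;
  cstarD : forall x y, cstar (x + y) = cstar x + cstar y;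
  cstarZ : forall (a : R[i]) x, cstar (a *: x) = a^* *: cstar x;
  cstarK : forall x, cstar (cstar x) = x;
  cstarM : forall x y, cstar (cmul x y) = cmul (cstar y) (cstar x);
  cnormM : forall x y, `|cmul x y| <= `|x| * `|y|;
  cnorm_cstar_id : forall x, `|cmul (cstar x) x| = `|x| ^+ 2
}.

Section Defs.
Context {R : realType} {V : completeNormedModType R[i]} (B : cstar_algebra V).

Local Notation "x * y" := (cmul B x y).
Local Notation "x ^*" := (cstar B x).

Definition is_subspace (S : set V) : Prop :=
  S 0 /\ (forall (a : R[i]) x y, S x -> S y -> S (a *: x + y)).

Definition closed_star_subalgebra (A : set V) : Prop :=
  [/\ is_subspace A, closed A,
      (forall x y, A x -> A y -> A (x * y)) & (forall x, A x -> A (x ^*))].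

Definition ideal_of (A I : set V) : Prop :=
  [/\ is_subspace I, closed I, I `<=` A &
      (forall a x, A a -> I x -> I (a * x) /\ I (x * a))].

Definition ideal (J : set V) : Prop := ideal_of setT J.

Definition cspan (S : set V) : set V :=
  \bigcap_(W in [set W : set V | [/\ is_subspace W, closed W & S `<=` W]]) W.

Definition setM (S T : set V) : set V :=
  [set z | exists x y, [/\ S x, T y & z = x * y]].

Definition normalizer (A : set V) (n : V) : Prop :=
  (forall a, A a -> A (n ^* * a * n)) /\ (forall a, A a -> A (n * a * n ^*)).

Definition positive (x : V) : Prop := exists y, x = y ^* * y.

(* A contains an approximate unit for B: a net (here: a proper filter on an
   index type) of positive contractions e_i of A with e_i b -> b and b e_i -> b
   for every b in B. *)
Definition has_approx_unit (A : set V) : Prop :=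
  exists (I : Type) (F : set_system I) (e : I -> V),
    [/\ ProperFilter F,
        (forall i, A (e i) /\ positive (e i) /\ `|e i| <= 1) &
        (forall b, ((fun i => e i * b) @ F --> b) /\ ((fun i => b * e i) @ F --> b))].

Definition regular_subalgebra (A : set V) : Prop :=
  [/\ closed_star_subalgebra A,
      closure (cspan (normalizer A)) = setT &
      has_approx_unit A].

Definition normalizer_invariant (A S : set V) : Prop :=
  forall n, normalizer A n -> forall s, S s -> S (n * s * n ^*).

Definition B_invariant (S : set V) : Prop :=
  cspan (setM S setT) = cspan (setM setT S).

Definition Ann (A I : set V) : set V :=
  [set x | A x /\ forall s, I s -> x * s = 0].

Definition regular_ideal (A I : set V) : Prop := Ann A (Ann A I) = I.

Definition ideal_intersection_property (A : set V) : Prop :=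
  forall J, ideal J -> J <> [set 0] -> J `&` A <> [set 0].

End Defs.

(** [Ann_A(I)] is the one-sided annihilator [{x in A | x I = 0}].  Given a
    normalizer [n], [s] in [I] and [x] in [Ann_A(I)], the regularity
    [I = Ann_A(Ann_A(I))] gives [I x = 0], hence [[B I] x = 0] by
    continuity of right multiplication; B-invariance turns this into
    [[I B] x = 0], so [s n^* x = 0] and [n s n^* x = 0].  As [n s n^*] lies in
    [A], it lies in [Ann_A(Ann_A(I)) = I]. *)
From HB Require Import structures.
From mathcomp Require Import all_boot all_order all_algebra.
From mathcomp Require Import all_classical all_reals all_analysis.
From mathcomp Require Import complex.
Import Order.TTheory GRing.Theory Num.Theory.
Import numFieldNormedType.Exports.

Set Implicit Arguments.
Unset Strict Implicit.
Unset Printing Implicit Defensive.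

Local Open Scope classical_set_scope.
Local Open Scope ring_scope.

Section ClosedSpan.
Context {R : realType} {V : completeNormedModType R[i]} {W : normedModType R[i]}.

Lemma sub_cspan (S : set V) : S `<=` cspan S.
Proof. by move=> s Ss U [_ _ SU]; exact: SU. Qed.

Lemma cspan_sub_kernel (f : {linear V -> W}) (S : set V) :
  continuous f -> S `<=` f @^-1` [set 0] -> cspan S `<=` f @^-1` [set 0].
Proof.
move=> fcont Sf z; apply; split => //.
- split=> [|a y w fy fw]; first exact: linear0.
  by rewrite /preimage /= linearP fy fw scaler0 addr0.
- apply: preimage_closed => [y _|]; first exact: fcont.
  exact/accessible_closed_set1/hausdorff_accessible/norm_hausdorff.
Qed.

End ClosedSpan.

Section CstarAlgebraFacts.
Context {R : realType} {V : completeNormedModType R[i]} (B : cstar_algebra V).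

Local Notation "x * y" := (cmul B x y).

Lemma cmulr0 (z : V) : z * 0 = 0.
Proof.
have := cmul_linr B 1 0 0 z; rewrite !scale1r addr0 => h.
by apply: (@addrI _ (z * 0)); rewrite addr0 -h.
Qed.

Definition rcmul (x z : V) : V := z * x.

Lemma rcmulE (x z : V) : rcmul x z = z * x. Proof. by []. Qed.

Lemma rcmul_is_linear (x : V) : linear (rcmul x).
Proof. by move=> a z w; rewrite /rcmul cmul_linl. Qed.

HB.instance Definition _ (x : V) :=
  GRing.isLinear.Build R[i] V V *:%R (rcmul x) (rcmul_is_linear x).

Lemma rcmul_continuous (x : V) : continuous (rcmul x).
Proof.
apply: bounded_linear_continuous; apply/linear_boundedP.
near=> r => z; rewrite /rcmul (le_trans (cnormM B z x)) // mulrC ler_wpM2r //.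
Unshelve. all: by end_near. Qed.

Lemma regular_ideal_mul_Ann (A I : set V) (s x : V) :
  regular_ideal B A I -> I s -> Ann B A I x -> s * x = 0.
Proof. by move=> regI; rewrite -{1}regI => -[_ sAnn]; exact: sAnn. Qed.

Lemma B_invariant_right_annihilator (I : set V) (x : V) :
  B_invariant B I -> (forall s, I s -> s * x = 0) ->
  forall s b, I s -> s * b * x = 0.
Proof.
move=> BI Ix s b Is.
have BIx : cspan (setM B setT I) `<=` rcmul x @^-1` [set 0].
  apply: cspan_sub_kernel; first exact: rcmul_continuous.
  by move=> _ [c [t [_ It ->]]]; rewrite /preimage /= rcmulE -cmulA Ix // cmulr0.
by apply: BIx; rewrite -BI; apply: sub_cspan; exists s, b.
Qed.

End CstarAlgebraFacts.

Theorem proposition4p3 (R : realType) (V : completeNormedModType R[i])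
  (B : cstar_algebra V) (A : set V) :
  regular_subalgebra B A ->
  ideal_intersection_property B A ->
  forall I : set V,
    ideal_of B A I -> B_invariant B I -> regular_ideal B A I ->
    normalizer_invariant B A I.
Proof.
move=> _ _ I [_ _ IA _] BI regI n [_ nAn] s Is.
rewrite -regI; split; first exact/nAn/IA.
move=> x Ax.
have Ix t : I t -> cmul B t x = 0 by move=> It; exact: regular_ideal_mul_Ann Ax.
by rewrite -(cmulA B n s) -cmulA (B_invariant_right_annihilator BI Ix _ Is) cmulr0.
Qed.
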